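(* Let $X$ be a real Hilbert space, let $A$ be a nonempty closed convex subset of $X$ and $B$ a closed affine subspace of $X$ (with $A\cap B$ possibly empty). Let $g:=P_{\overline{B-A}}\,0$ and assume $g\in B-A$, so that $E:=A\cap(B-g)$ and $F:=(A+g)\cap B$ are nonempty. Let $T:=\mathrm{Id}-P_A+P_BR_A$ and let $x\in X$. Then: (i) $(P_AT^nx)_{n\in\mathbb{N}}$ converges weakly to some point in $E$; (ii) $(P_BT^nx)_{n\in\mathbb{N}}$ converges weakly to some point in $F$.
   Context: For a nonempty closed convex set $C\subseteq X$, $P_C$ denotes the metric projection onto $C$ and $R_C:=2P_C-\mathrm{Id}$. $T$ is the Douglas–Rachford operator for the ordered pair $(A,B)$. $g$ is the element of minimal norm in the closure of $B-A=\{b-a:a\in A,b\in B\}$. *)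

From Stdlib Require Import Reals Lra ClassicalEpsilon.
Open Scope R_scope.

Record Hilbert := mkHilbert {
  carrier :> Type;
  hzero : carrier;
  hadd : carrier -> carrier -> carrier;
  hopp : carrier -> carrier;
  hscal : R -> carrier -> carrier;
  hinner : carrier -> carrier -> R;
  hadd_assoc : forall x y z, hadd x (hadd y z) = hadd (hadd x y) z;
  hadd_comm : forall x y, hadd x y = hadd y x;
  hadd_0 : forall x, hadd x hzero = x;
  hadd_opp : forall x, hadd x (hopp x) = hzero;
  hscal_assoc : forall a b x, hscal a (hscal b x) = hscal (a * b) x;
  hscal_1 : forall x, hscal 1 x = x;
  hscal_distr_v : forall a x y, hscal a (hadd x y) = hadd (hscal a x) (hscal a y);
  hscal_distr_s : forall a b x, hscal (a + b) x = hadd (hscal a x) (hscal b x);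
  hinner_sym : forall x y, hinner x y = hinner y x;
  hinner_add_l : forall x y z, hinner (hadd x y) z = hinner x z + hinner y z;
  hinner_scal_l : forall a x y, hinner (hscal a x) y = a * hinner x y;
  hinner_pos : forall x, 0 <= hinner x x;
  hinner_def : forall x, hinner x x = 0 -> x = hzero;
  hcomplete : forall u : nat -> carrier,
    (forall eps, 0 < eps -> exists N, forall m n, (N <= m)%nat -> (N <= n)%nat ->
       sqrt (hinner (hadd (u m) (hopp (u n))) (hadd (u m) (hopp (u n)))) < eps) ->
    exists l, forall eps, 0 < eps -> exists N, forall n, (N <= n)%nat ->
       sqrt (hinner (hadd (u n) (hopp l)) (hadd (u n) (hopp l))) < eps
}.

Section Ops.
Variable X : Hilbert.

Definition hsub (x y : X) : X := hadd X x (hopp X y).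
Definition hnorm (x : X) : R := sqrt (hinner X x x).

Definition closure (S : X -> Prop) : X -> Prop :=
  fun y => forall eps, 0 < eps -> exists s, S s /\ hnorm (hsub y s) < eps.

Definition is_closed (S : X -> Prop) : Prop := forall y, closure S y -> S y.

Definition is_convex (S : X -> Prop) : Prop :=
  forall x y t, S x -> S y -> 0 <= t <= 1 ->
    S (hadd X (hscal X t x) (hscal X (1 - t) y)).

Definition is_affine (S : X -> Prop) : Prop :=
  (exists x, S x) /\
  forall x y t, S x -> S y -> S (hadd X (hscal X t x) (hscal X (1 - t) y)).

(* B - A = {b - a : a in A, b in B} *)
Definition set_diff (B A : X -> Prop) : X -> Prop :=
  fun z => exists a b, A a /\ B b /\ z = hsub b a.

Definition is_proj (C : X -> Prop) (x p : X) : Prop :=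
  C p /\ forall c, C c -> hnorm (hsub x p) <= hnorm (hsub x c).

(* metric projection P_C (well defined, i.e. unique existence, when C is
   nonempty closed convex in a Hilbert space) *)
Definition proj (C : X -> Prop) (x : X) : X :=
  epsilon (inhabits x) (fun p => is_proj C x p).

Definition refl (C : X -> Prop) (x : X) : X :=
  hsub (hscal X 2 (proj C x)) x.

Definition DR (A B : X -> Prop) (x : X) : X :=
  hadd X (hsub x (proj A x)) (proj B (refl A x)).

Definition weak_cv (u : nat -> X) (l : X) : Prop :=
  forall y, Un_cv (fun n => hinner X (u n) y) (hinner X l y).

End Ops.
Arguments hsub {X}. Arguments hnorm {X}.

(* For e in E := A ∩ (B - g), the vector g is normal to A at e and orthogonal to B - B,
   so P_A (e + t g) = e for t >= 0 and P_B (e - t g) = e + g; hence T (e + n g) = e + (n+1) g.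
   As T is firmly nonexpansive, z_n := T^n x - n g is Fejér monotone with respect to E and
   b_n - a_n -> g in norm, where a_n = P_A T^n x and b_n = P_B R_A T^n x.  Consequently the
   bounded sequence (a_n) has all its weak cluster points in E, and <a_n, p - q> converges
   for p, q in E, so an Opial-type argument makes a_n converge weakly to some e in E.
   Finally P_B T^(n+1) x = P_B (a_n + g) stays within |b_n - a_n - g| of a_n + g, so it
   converges weakly to e + g. *)

From Stdlib Require Import Reals Lra Psatz ClassicalEpsilon Classical.
Open Scope R_scope.

Section InnerProduct.
Variable X : Hilbert.

Lemma hinner_0_l (y : X) : hinner X (hzero X) y = 0.
Proof.
  pose proof (hinner_add_l X (hzero X) (hzero X) y) as H.
  rewrite hadd_0 in H. lra.
Qed.

Lemma hinner_opp_l (u y : X) : hinner X (hopp X u) y = - hinner X u y.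
Proof.
  pose proof (hinner_add_l X u (hopp X u) y) as H.
  rewrite hadd_opp, hinner_0_l in H. lra.
Qed.

Lemma hinner_sub_l (u v y : X) : hinner X (hsub u v) y = hinner X u y - hinner X v y.
Proof. unfold hsub. rewrite hinner_add_l, hinner_opp_l. ring. Qed.

Lemma hinner_0_r (y : X) : hinner X y (hzero X) = 0.
Proof. rewrite hinner_sym. apply hinner_0_l. Qed.

Lemma hinner_add_r (u v y : X) : hinner X y (hadd X u v) = hinner X y u + hinner X y v.
Proof. rewrite !(hinner_sym X y). apply hinner_add_l. Qed.

Lemma hinner_scal_r a (u y : X) : hinner X y (hscal X a u) = a * hinner X y u.
Proof. rewrite !(hinner_sym X y). apply hinner_scal_l. Qed.

Lemma hinner_opp_r (u y : X) : hinner X y (hopp X u) = - hinner X y u.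
Proof. rewrite !(hinner_sym X y). apply hinner_opp_l. Qed.

Lemma hinner_sub_r (u v y : X) : hinner X y (hsub u v) = hinner X y u - hinner X y v.
Proof. rewrite !(hinner_sym X y). apply hinner_sub_l. Qed.

Lemma hvec_ext (u v : X) : (forall y, hinner X u y = hinner X v y) -> u = v.
Proof.
  intro H.
  assert (Hd : hsub u v = hzero X).
  { apply hinner_def. rewrite hinner_sub_l, H. ring. }
  transitivity (hadd X (hsub u v) v).
  - unfold hsub. rewrite <- hadd_assoc, (hadd_comm X (hopp X v)), hadd_opp, hadd_0.
    reflexivity.
  - rewrite Hd, hadd_comm, hadd_0. reflexivity.
Qed.

Lemma hsub_eq0 (u v : X) : hsub u v = hzero X -> u = v.
Proof.
  intro H. apply hvec_ext. intro y.
  pose proof (hinner_sub_l u v y) as E. rewrite H, hinner_0_l in E. lra.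
Qed.

End InnerProduct.

Hint Rewrite hinner_0_l hinner_opp_l hinner_sub_l hinner_0_r hinner_add_r
  hinner_scal_r hinner_opp_r hinner_sub_r hinner_add_l hinner_scal_l : hinner.

(* Vector identities are checked coordinatewise against an arbitrary test vector. *)
Ltac hring := apply hvec_ext; intro; autorewrite with hinner; ring.

Ltac hinner_sym_normalize :=
  repeat match goal with
  | |- context [hinner ?X ?a ?b] =>
      match goal with
      | |- context [hinner X b a] =>
          tryif unify a b then fail else rewrite (hinner_sym X b a)
      end
  end.

Ltac hinner_expand := autorewrite with hinner; hinner_sym_normalize.

Section Norm.
Variable X : Hilbert.
Notation ip := (hinner X).
Implicit Types u v w y : X.

Definition hnorm2 u := ip u u.

Lemma hnorm2_ge0 u : 0 <= hnorm2 u.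
Proof. apply hinner_pos. Qed.

Lemma hnorm_ge0 u : 0 <= hnorm u.
Proof. apply sqrt_pos. Qed.

Lemma hnorm_sqr u : hnorm u * hnorm u = hnorm2 u.
Proof. unfold hnorm. apply sqrt_sqrt, hnorm2_ge0. Qed.

Lemma hnorm_lt_sqr u eps : 0 < eps -> (hnorm u < eps <-> hnorm2 u < eps * eps).
Proof.
  intro He. pose proof (hnorm_sqr u). pose proof (hnorm_ge0 u). split; intro; nra.
Qed.

Lemma hnorm_le_sqr u v : hnorm u <= hnorm v <-> hnorm2 u <= hnorm2 v.
Proof.
  pose proof (hnorm_sqr u). pose proof (hnorm_ge0 u).
  pose proof (hnorm_sqr v). pose proof (hnorm_ge0 v). split; intro; nra.
Qed.

Lemma cauchy_schwarz u v : ip u v * ip u v <= hnorm2 u * hnorm2 v.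
Proof.
  unfold hnorm2.
  destruct (Req_dec (ip v v) 0) as [H0|H0].
  - apply hinner_def in H0. subst. rewrite hinner_0_r, hinner_0_l. lra.
  - pose proof (hinner_pos X v) as Hv.
    pose proof (hinner_pos X (hsub u (hscal X (ip u v / ip v v) v))) as H1.
    revert H1. hinner_expand. intro H.
    set (a := ip u u) in *. set (b := ip u v) in *. set (c := ip v v) in *.
    assert (Hc : 0 < c) by lra.
    assert (E : a - b / c * b - b / c * (b - b / c * c) = (a * c - b * b) / c)
      by (field; lra).
    rewrite E in H.
    assert (E2 : a * c - b * b = ((a * c - b * b) / c) * c) by (field; lra).
    nra.
Qed.

Lemma Rabs_hinner_le u v : Rabs (ip u v) <= hnorm u * hnorm v.
Proof.
  pose proof (cauchy_schwarz u v) as H.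
  rewrite <- (hnorm_sqr u), <- (hnorm_sqr v) in H.
  pose proof (hnorm_ge0 u). pose proof (hnorm_ge0 v).
  assert (0 <= hnorm u * hnorm v) by nra.
  destruct (Rcase_abs (ip u v)); [rewrite Rabs_left | rewrite Rabs_right]; nra.
Qed.

Lemma hinner_le u v : ip u v <= hnorm u * hnorm v.
Proof. pose proof (Rabs_hinner_le u v). pose proof (Rle_abs (ip u v)). lra. Qed.

Lemma hnorm_triangle u v : hnorm (hadd X u v) <= hnorm u + hnorm v.
Proof.
  pose proof (hnorm_ge0 u). pose proof (hnorm_ge0 v). pose proof (hnorm_ge0 (hadd X u v)).
  pose proof (hnorm_sqr (hadd X u v)) as E. unfold hnorm2 in E. revert E.
  hinner_expand. intro E.
  pose proof (hnorm_sqr u). pose proof (hnorm_sqr v). unfold hnorm2 in *.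
  pose proof (hinner_le u v). nra.
Qed.

Lemma hnorm_scal a u : hnorm (hscal X a u) = Rabs a * hnorm u.
Proof.
  unfold hnorm. replace (ip (hscal X a u) (hscal X a u)) with (Rsqr a * ip u u)
    by (hinner_expand; unfold Rsqr; ring).
  rewrite sqrt_mult by (try apply Rle_0_sqr; apply hinner_pos).
  rewrite sqrt_Rsqr_abs. reflexivity.
Qed.

Lemma hnorm_sub_sym u v : hnorm (hsub u v) = hnorm (hsub v u).
Proof. unfold hnorm. f_equal. hinner_expand. ring. Qed.

Lemma hnorm_sub_triangle u v w : hnorm (hsub u w) <= hnorm (hsub u v) + hnorm (hsub v w).
Proof.
  replace (hsub u w) with (hadd X (hsub u v) (hsub v w)) by hring.
  apply hnorm_triangle.
Qed.

Lemma closure_subset (S : X -> Prop) y : S y -> closure X S y.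
Proof.
  intros Hy eps He. exists y. split; auto.
  replace (hsub y y) with (hzero X) by hring.
  unfold hnorm. rewrite hinner_0_l, sqrt_0. lra.
Qed.

Lemma closure_closed (S : X -> Prop) : is_closed X (closure X S).
Proof.
  intros y Hy eps He.
  destruct (Hy (eps/2)) as [s' [Hs' Hn']]; [lra|].
  destruct (Hs' (eps/2)) as [s [Hs Hn]]; [lra|].
  exists s. split; auto. pose proof (hnorm_sub_triangle y s' s). lra.
Qed.

Lemma closure_convex (S : X -> Prop) : is_convex X S -> is_convex X (closure X S).
Proof.
  intros HS y1 y2 t H1 H2 Ht eps He.
  destruct (H1 eps He) as [s1 [Hs1 Hn1]].
  destruct (H2 eps He) as [s2 [Hs2 Hn2]].
  exists (hadd X (hscal X t s1) (hscal X (1 - t) s2)). split; [apply HS; auto|].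
  replace (hsub (hadd X (hscal X t y1) (hscal X (1 - t) y2))
                (hadd X (hscal X t s1) (hscal X (1 - t) s2)))
    with (hadd X (hscal X t (hsub y1 s1)) (hscal X (1 - t) (hsub y2 s2))) by hring.
  eapply Rle_lt_trans; [apply hnorm_triangle|].
  rewrite !hnorm_scal, Rabs_right, Rabs_right by lra.
  pose proof (hnorm_ge0 (hsub y1 s1)). pose proof (hnorm_ge0 (hsub y2 s2)).
  destruct (Req_dec t 0) as [->|Ht0]; [lra|].
  assert (t * hnorm (hsub y1 s1) < t * eps) by (apply Rmult_lt_compat_l; lra).
  assert ((1 - t) * hnorm (hsub y2 s2) <= (1 - t) * eps) by (apply Rmult_le_compat_l; lra).
  lra.
Qed.

End Norm.

Lemma eventually_inv_lt eps : 0 < eps -> exists N, forall n, (N <= n)%nat -> / (INR n + 1) < eps.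
Proof.
  intro He. destruct (archimed_cor1 eps He) as [N [HN HN0]]. exists N. intros n Hn.
  apply le_INR in Hn. apply lt_INR in HN0. simpl in HN0.
  eapply Rle_lt_trans; [|apply HN]. apply Rinv_le_contravar; lra.
Qed.

Section Projection.
Variable X : Hilbert.
Notation ip := (hinner X).
Notation hnorm2 := (hnorm2 X).
Implicit Types u v x y p q c : X.
Variable C : X -> Prop.

Lemma is_proj_variational x p : is_convex X C -> is_proj X C x p ->
  forall c, C c -> ip (hsub x p) (hsub c p) <= 0.
Proof.
  intros HC [Hp Hmin] c Hc.
  assert (Ht : forall t, 0 < t <= 1 -> 2 * ip (hsub x p) (hsub c p) <= t * hnorm2 (hsub c p)).
  { intros t Ht.
    pose proof (Hmin _ (HC c p t Hc Hp ltac:(lra))) as H.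
    apply hnorm_le_sqr in H. unfold hnorm2 in *. revert H. hinner_expand. intro H.
    hinner_expand. nra. }
  pose proof (hnorm2_ge0 X (hsub c p)).
  set (a := ip (hsub x p) (hsub c p)) in *. set (b := hnorm2 (hsub c p)) in *.
  destruct (Rle_dec a 0) as [|Hn]; auto.
  exfalso. specialize (Ht (a / (2 * b + a))).
  assert (Hq : a / (2 * b + a) * b * (2 * b + a) = a * b) by (field; lra).
  assert (Hq1 : a / (2 * b + a) * (2 * b + a) = a) by (field; lra).
  assert (0 < a / (2 * b + a) <= 1).
  { split; [apply Rdiv_lt_0_compat; lra|].
    apply Rmult_le_reg_r with (2 * b + a); [lra|]. lra. }
  specialize (Ht H0).
  assert (a / (2 * b + a) * b < a).
  { apply Rmult_lt_reg_r with (2 * b + a); [lra|]. rewrite Hq. nra. }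
  lra.
Qed.

Lemma variational_is_proj x p : C p ->
  (forall c, C c -> ip (hsub x p) (hsub c p) <= 0) -> is_proj X C x p.
Proof.
  intros Hp H. split; auto. intros c Hc. apply hnorm_le_sqr.
  specialize (H c Hc). pose proof (hnorm2_ge0 X (hsub p c)).
  unfold hnorm2 in *. revert H H0. hinner_expand. intros. nra.
Qed.

Lemma is_proj_unique x p q : is_convex X C -> is_proj X C x p -> is_proj X C x q -> p = q.
Proof.
  intros HC Hp Hq.
  pose proof (is_proj_variational x p HC Hp q (proj1 Hq)).
  pose proof (is_proj_variational x q HC Hq p (proj1 Hp)).
  apply hsub_eq0, hinner_def. apply Rle_antisym; [|apply hinner_pos].
  revert H H0. hinner_expand. intros. nra.
Qed.

Lemma dist2_inf x : (exists c, C c) -> exists d, 0 <= d /\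
  (forall c, C c -> d <= hnorm2 (hsub x c)) /\
  (forall eps, 0 < eps -> exists c, C c /\ hnorm2 (hsub x c) < d + eps).
Proof.
  intros [c0 Hc0].
  set (E := fun r => exists c, C c /\ r = - hnorm2 (hsub x c)).
  assert (Hb : bound E).
  { exists 0. intros r [c [_ ->]]. pose proof (hnorm2_ge0 X (hsub x c)). lra. }
  destruct (completeness E Hb (ex_intro _ _ (ex_intro _ c0 (conj Hc0 eq_refl))))
    as [m [Hub Hlub]].
  exists (- m). split; [|split].
  - assert (m <= 0); [|lra]. apply Hlub.
    intros r [c [_ ->]]. pose proof (hnorm2_ge0 X (hsub x c)). lra.
  - intros c Hc. assert (E (- hnorm2 (hsub x c))) by (exists c; auto).
    apply Hub in H. lra.
  - intros eps He. apply NNPP. intro Hn.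
    assert (m <= m - eps); [|lra].
    apply Hlub. intros r [c [Hc ->]]. apply Rnot_lt_le. intro Hlt. apply Hn. exists c.
    split; auto. lra.
Qed.

(* Parallelogram law at the midpoint of [c1, c2]. *)
Lemma near_minimizers_close x d c1 c2 e1 e2 : is_convex X C ->
  (forall c, C c -> d <= hnorm2 (hsub x c)) -> C c1 -> C c2 ->
  hnorm2 (hsub x c1) < d + e1 -> hnorm2 (hsub x c2) < d + e2 ->
  hnorm2 (hsub c1 c2) <= 2 * e1 + 2 * e2.
Proof.
  intros HC Hd H1 H2 Hn1 Hn2.
  pose proof (Hd _ (HC c1 c2 (1/2) H1 H2 ltac:(lra))) as Hmid.
  unfold hnorm2 in *. revert Hn1 Hn2 Hmid. hinner_expand. intros. nra.
Qed.

End Projection.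

Lemma hnorm2_le_of_approx (X : Hilbert) (x l : X) d : 0 <= d ->
  (forall eps, 0 < eps -> exists c, hnorm2 X (hsub x c) < d + eps /\ hnorm (hsub c l) < eps) ->
  hnorm2 X (hsub x l) <= d.
Proof.
  intros Hd H.
  set (s := hnorm (hsub x l)).
  assert (Hs : s * s = hnorm2 X (hsub x l)) by apply hnorm_sqr.
  assert (Hs0 : 0 <= s) by apply hnorm_ge0.
  rewrite <- Hs. apply le_epsilon. intros eps He.
  destruct (H (eps / (1 + 2 * s))) as [c [Hc1 Hc2]].
  { apply Rdiv_lt_0_compat; lra. }
  set (e := eps / (1 + 2 * s)) in *.
  assert (Hee : e * (1 + 2 * s) = eps) by (unfold e; field; lra).
  pose proof (hnorm_sub_triangle X x c l) as Htri. fold s in Htri.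
  pose proof (hnorm_sqr X (hsub x c)). pose proof (hnorm_ge0 X (hsub x c)).
  destruct (Rle_dec s e); nra.
Qed.

Section ProjectionExists.
Variable X : Hilbert.
Notation ip := (hinner X).
Notation hnorm2 := (hnorm2 X).
Implicit Types u v x y p q c : X.
Variable C : X -> Prop.
Hypothesis hCne : exists c, C c.
Hypothesis hCcl : is_closed X C.
Hypothesis hCcv : is_convex X C.

Lemma is_proj_exists x : exists p, is_proj X C x p.
Proof.
  destruct (dist2_inf X C x hCne) as [d [Hd0 [Hlow Happ]]].
  assert (Hseq : forall n : nat, exists c, C c /\ hnorm2 (hsub x c) < d + / (INR n + 1)).
  { intro n. apply Happ. apply Rinv_0_lt_compat. pose proof (pos_INR n). lra. }
  destruct (choice _ Hseq) as [cs Hcs].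
  destruct (hcomplete X cs) as [l Hl].
  { intros eps He. destruct (eventually_inv_lt (eps * eps / 4)) as [N HN]; [nra|].
    exists N. intros n k Hn Hk.
    change (hnorm (hsub (cs n) (cs k)) < eps). apply hnorm_lt_sqr; auto.
    pose proof (near_minimizers_close X C x d _ _ _ _ hCcv Hlow
      (proj1 (Hcs n)) (proj1 (Hcs k)) (proj2 (Hcs n)) (proj2 (Hcs k))).
    pose proof (HN n Hn). pose proof (HN k Hk). lra. }
  change (forall eps, 0 < eps -> exists N, forall n, (N <= n)%nat ->
    hnorm (hsub (cs n) l) < eps) in Hl.
  assert (Hlc : C l).
  { apply hCcl. intros eps He. destruct (Hl eps He) as [N HN]. exists (cs N).
    split; [apply Hcs|]. rewrite hnorm_sub_sym. apply HN. lia. }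
  assert (Hxl : hnorm2 (hsub x l) <= d).
  { apply hnorm2_le_of_approx; auto. intros eps He.
    destruct (Hl eps He) as [N1 HN1]. destruct (eventually_inv_lt eps He) as [N2 HN2].
    exists (cs (max N1 N2)). split.
    - pose proof (HN2 (max N1 N2) ltac:(lia)). pose proof (proj2 (Hcs (max N1 N2))). lra.
    - apply HN1. lia. }
  exists l. split; auto. intros c Hc. apply hnorm_le_sqr.
  pose proof (Hlow c Hc). lra.
Qed.

Lemma proj_spec x : is_proj X C x (proj X C x).
Proof. unfold proj. apply epsilon_spec. apply is_proj_exists. Qed.

Lemma proj_mem x : C (proj X C x).
Proof. apply proj_spec. Qed.

Lemma proj_variational x : forall c, C c -> ip (hsub x (proj X C x)) (hsub c (proj X C x)) <= 0.
Proof. apply is_proj_variational; auto. apply proj_spec. Qed.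

Lemma proj_eq_variational x p : C p ->
  (forall c, C c -> ip (hsub x p) (hsub c p) <= 0) -> proj X C x = p.
Proof.
  intros. apply (is_proj_unique X C x); auto. apply proj_spec. apply variational_is_proj; auto.
Qed.

Lemma proj_firmly_nonexp u v :
  hnorm2 (hsub (proj X C u) (proj X C v)) <= ip (hsub (proj X C u) (proj X C v)) (hsub u v).
Proof.
  pose proof (proj_variational u (proj X C v) (proj_mem v)).
  pose proof (proj_variational v (proj X C u) (proj_mem u)).
  unfold hnorm2. revert H H0. hinner_expand. intros. nra.
Qed.

Lemma proj_nonexp u v : hnorm2 (hsub (proj X C u) (proj X C v)) <= hnorm2 (hsub u v).
Proof.
  pose proof (proj_firmly_nonexp u v).
  pose proof (hnorm2_ge0 X (hsub (hsub (proj X C u) (proj X C v)) (hsub u v))).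
  unfold hnorm2 in *. revert H H0. hinner_expand. intros. nra.
Qed.

Lemma refl_nonexp u v : hnorm2 (hsub (refl X C u) (refl X C v)) <= hnorm2 (hsub u v).
Proof.
  pose proof (proj_firmly_nonexp u v). unfold refl.
  set (p := proj X C u) in *. set (q := proj X C v) in *.
  unfold hnorm2 in *. revert H. hinner_expand. intro. nra.
Qed.

End ProjectionExists.

Definition strictly_increasing (phi : nat -> nat) := forall n, (phi n < phi (S n))%nat.

Lemma strictly_increasing_lt phi : strictly_increasing phi ->
  forall n m, (n < m)%nat -> (phi n < phi m)%nat.
Proof. intros H n m Hnm. induction Hnm; [apply H|]. specialize (H m). lia. Qed.

Lemma strictly_increasing_ge_id phi : strictly_increasing phi -> forall n, (n <= phi n)%nat.
Proof. intros H n. induction n; [lia|]. specialize (H n). lia. Qed.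

Lemma strictly_increasing_comp phi psi :
  strictly_increasing phi -> strictly_increasing psi -> strictly_increasing (fun n => phi (psi n)).
Proof. intros H1 H2 n. apply strictly_increasing_lt; auto. Qed.

Fixpoint subseq_from (pick : nat -> nat -> nat) (k : nat) : nat :=
  match k with
  | 0 => pick 0%nat 0%nat
  | S k' => pick (S k') (S (subseq_from pick k'))
  end.

Lemma subseq_exists (P : nat -> nat -> Prop) :
  (forall k N, exists n, (N <= n)%nat /\ P k n) ->
  exists phi, strictly_increasing phi /\ forall k, P k (phi k).
Proof.
  intro H. destruct (choice (fun kN n => (snd kN <= n)%nat /\ P (fst kN) n)) as [pick Hp].
  { intros [k N]. apply H. }
  exists (subseq_from (fun k N => pick (k, N))). split.
  - intro n. simpl. destruct (Hp (S n, S (subseq_from (fun k N => pick (k, N)) n))).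
    simpl in *. lia.
  - intros [|k]; apply (Hp (_, _)).
Qed.

Lemma Un_cv_subseq (a : nat -> R) l phi :
  Un_cv a l -> strictly_increasing phi -> Un_cv (fun n => a (phi n)) l.
Proof.
  intros H Hp eps He. destruct (H eps He) as [N HN]. exists N. intros n Hn.
  apply HN. pose proof (strictly_increasing_ge_id phi Hp n). lia.
Qed.

Lemma Un_cv_S (a : nat -> R) l : Un_cv a l -> Un_cv (fun n => a (S n)) l.
Proof.
  intros H eps He. destruct (H eps He) as [N HN]. exists N. intros n Hn. apply HN. lia.
Qed.

Lemma Un_cv_of_S (a : nat -> R) l : Un_cv (fun n => a (S n)) l -> Un_cv a l.
Proof.
  intros H eps He. destruct (H eps He) as [N HN]. exists (S N). intros n Hn.
  destruct n; [lia|]. apply HN. lia.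
Qed.

Lemma Un_cv_const (c : R) : Un_cv (fun _ => c) c.
Proof.
  intros eps He. exists 0%nat. intros. unfold Rdist. rewrite Rminus_diag, Rabs_R0. lra.
Qed.

Lemma Un_cv_lincomb (a b : nat -> R) la lb al be :
  Un_cv a la -> Un_cv b lb -> Un_cv (fun n => al * a n + be * b n) (al * la + be * lb).
Proof. intros Ha Hb. apply CV_plus; apply CV_mult; auto; apply Un_cv_const. Qed.

Lemma Un_cv_le_0 (a : nat -> R) l : Un_cv a l -> (forall n, a n <= 0) -> l <= 0.
Proof.
  intros H Hn. apply Rnot_lt_le. intro Hl. destruct (H l Hl) as [N HN].
  specialize (HN N (le_n N)). specialize (Hn N). unfold Rdist in HN.
  rewrite Rabs_left1 in HN by lra. lra.
Qed.

Lemma Un_cv_Rabs_le (a : nat -> R) l B : Un_cv a l -> (forall n, Rabs (a n) <= B) -> Rabs l <= B.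
Proof.
  intros H HB. apply Rnot_lt_le. intro Hlt.
  destruct (H (Rabs l - B)) as [N HN]; [lra|].
  specialize (HN N (le_n N)). specialize (HB N). unfold Rdist in HN.
  pose proof (Rabs_triang_inv l (a N)). rewrite Rabs_minus_sym in HN. lra.
Qed.

Lemma Un_cv_dist_ge (a : nat -> R) l c eps :
  Un_cv a l -> (forall n, eps <= Rabs (a n - c)) -> eps <= Rabs (l - c).
Proof.
  intros H HB. apply Rnot_lt_le. intro Hlt.
  destruct (H (eps - Rabs (l - c))) as [N HN]; [lra|].
  specialize (HN N (le_n N)). specialize (HB N). unfold Rdist in HN.
  replace (a N - c) with ((a N - l) + (l - c)) in HB by ring.
  pose proof (Rabs_triang (a N - l) (l - c)). lra.
Qed.

Lemma decreasing_nonneg_cv (s : nat -> R) :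
  (forall n, s (S n) <= s n) -> (forall n, 0 <= s n) -> exists l, Un_cv s l.
Proof.
  intros H1 H2. destruct (decreasing_cv s H1) as [l Hl]; eauto.
  exists 0. intros r [i ->]. unfold opp_seq. specialize (H2 i). lra.
Qed.

Lemma bounded_cauchy_subseq (v : nat -> R) M : (forall n, Rabs (v n) <= M) ->
  exists phi, strictly_increasing phi /\ Cauchy_crit (fun n => v (phi n)).
Proof.
  intro HM.
  destruct (Bolzano_Weierstrass v (fun c => -M <= c <= M) (compact_P3 (-M) M)) as [l Hl].
  { intro n. specialize (HM n). pose proof (Rle_abs (v n)). pose proof (Rle_abs (- v n)).
    rewrite Rabs_Ropp in *. lra. }
  destruct (subseq_exists (fun k n => Rabs (v n - l) < / (INR k + 1))) as [phi [Hphi Hv]].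
  { intros k N. destruct (Hl (fun y => Rabs (y - l) < / (INR k + 1)) N) as [p [Hp Hvp]].
    - assert (Hd : 0 < / (INR k + 1))
        by (apply Rinv_0_lt_compat; pose proof (pos_INR k); lra).
      exists (mkposreal _ Hd). intros y Hy. exact Hy.
    - exists p. auto. }
  exists phi. split; auto. apply CV_Cauchy. exists l. intros eps He.
  destruct (eventually_inv_lt eps He) as [N HN]. exists N. intros n Hn.
  eapply Rlt_trans; [apply Hv|]. auto.
Qed.

(* Chosen once and for all, so that iterated extractions can be defined by recursion;
   the identity is used for unbounded sequences. *)
Definition cauchy_subseq (v : nat -> R) : nat -> nat :=
  epsilon (inhabits (fun n : nat => n)) (fun phi : nat -> nat => strictly_increasing phi /\
    ((exists M, forall n, Rabs (v n) <= M) -> Cauchy_crit (fun n => v (phi n)))).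

Lemma cauchy_subseq_spec v : strictly_increasing (cauchy_subseq v) /\
  ((exists M, forall n, Rabs (v n) <= M) -> Cauchy_crit (fun n => v (cauchy_subseq v n))).
Proof.
  unfold cauchy_subseq. apply epsilon_spec.
  destruct (classic (exists M, forall n, Rabs (v n) <= M)) as [[M HM]|Hn].
  - destruct (bounded_cauchy_subseq v M HM) as [phi [Hphi Hc]]. eauto.
  - exists (fun n => n). split; [intro n; lia | intro; contradiction].
Qed.

Section Subspace.
Variable X : Hilbert.
Notation ip := (hinner X).
Implicit Types u v w x y p q c : X.

Definition is_subspace (V : X -> Prop) := V (hzero X) /\
  forall y z a b, V y -> V z -> V (hadd X (hscal X a y) (hscal X b z)).

Lemma subspace_convex V : is_subspace V -> is_convex X V.
Proof. intros [_ H] y z t Hy Hz _. apply H; auto. Qed.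

Lemma proj_subspace_orth V w : is_subspace V -> is_closed X V ->
  forall c, V c -> ip (hsub w (proj X V w)) c = 0.
Proof.
  intros HV Hcl c Hc.
  assert (Hne : exists c, V c) by (exists (hzero X); apply HV).
  pose proof (subspace_convex V HV) as Hcv.
  set (v := proj X V w).
  assert (Hv : V v) by (apply proj_mem; auto).
  pose proof (proj_variational X V Hne Hcl Hcv w (hadd X (hscal X 1 v) (hscal X 1 c))
    (proj2 HV _ _ _ _ Hv Hc)) as H1.
  pose proof (proj_variational X V Hne Hcl Hcv w (hadd X (hscal X 1 v) (hscal X (-1) c))
    (proj2 HV _ _ _ _ Hv Hc)) as H2.
  fold v in H1, H2. revert H1 H2. hinner_expand. intros. hinner_expand. nra.
Qed.

Lemma closed_subspace_full V : is_subspace V -> is_closed X V ->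
  (forall y, (forall c, V c -> ip y c = 0) -> V y) -> forall y, V y.
Proof.
  intros HV Hcl Horth y.
  assert (Hne : exists c, V c) by (exists (hzero X); apply HV).
  set (v := proj X V y).
  assert (Hort : forall c, V c -> ip (hsub y v) c = 0) by (apply proj_subspace_orth; auto).
  assert (Hyv : hsub y v = hzero X) by (apply hinner_def, Hort, Horth, Hort).
  rewrite (hsub_eq0 X _ _ Hyv). apply proj_mem; auto. apply subspace_convex; auto.
Qed.

Section BoundedLinear.
Variable L : X -> R.
Variable K : R.
Hypothesis hK : 0 <= K.
Hypothesis hL : forall y z a b, L (hadd X (hscal X a y) (hscal X b z)) = a * L y + b * L z.
Hypothesis hLb : forall y, Rabs (L y) <= K * hnorm y.

Lemma linear_0 : L (hzero X) = 0.
Proof.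
  replace (hzero X) with (hadd X (hscal X 0 (hzero X)) (hscal X 0 (hzero X))) by hring.
  rewrite hL. ring.
Qed.

Lemma linear_sub y z : L (hsub y z) = L y - L z.
Proof.
  replace (hsub y z) with (hadd X (hscal X 1 y) (hscal X (-1) z)) by hring.
  rewrite hL. ring.
Qed.

Lemma kernel_subspace : is_subspace (fun y => L y = 0).
Proof.
  split; [apply linear_0|]. intros y z a b Hy Hz. rewrite hL, Hy, Hz. ring.
Qed.

Lemma kernel_closed : is_closed X (fun y => L y = 0).
Proof.
  intros y Hy. apply NNPP. intro Hne.
  assert (Hlt : 0 < Rabs (L y)) by (apply Rabs_pos_lt; auto).
  destruct (Hy (Rabs (L y) / (K + 1))) as [s [Hs Hns]]; [apply Rdiv_lt_0_compat; lra|].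
  pose proof (hLb (hsub y s)) as H. rewrite linear_sub, Hs, Rminus_0_r in H.
  assert (K * hnorm (hsub y s) <= K * (Rabs (L y) / (K + 1)))
    by (apply Rmult_le_compat_l; lra).
  assert (K * (Rabs (L y) / (K + 1)) < Rabs (L y)).
  { apply Rmult_lt_reg_r with (K + 1); [lra|].
    replace (K * (Rabs (L y) / (K + 1)) * (K + 1)) with (K * Rabs (L y)) by (field; lra).
    nra. }
  lra.
Qed.

(* The representing vector is a multiple of the component h of any w with L w <> 0
   orthogonal to the kernel. *)
Lemma riesz_representation : exists p, forall y, L y = ip p y.
Proof.
  destruct (classic (exists w0, L w0 <> 0)) as [[w0 Hw0]|Hall].
  2:{ exists (hzero X). intro y. rewrite hinner_0_l. apply NNPP. intro Hy. apply Hall. eauto. }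
  set (Ker := fun y => L y = 0).
  assert (Hne : exists c, Ker c) by (exists (hzero X); apply linear_0).
  set (h := hsub w0 (proj X Ker w0)).
  assert (Hhort : forall c, Ker c -> ip h c = 0)
    by (apply proj_subspace_orth; [apply kernel_subspace|apply kernel_closed]).
  assert (HLh : L h = L w0).
  { unfold h. rewrite linear_sub.
    assert (Ker (proj X Ker w0)) as ->; [|ring].
    apply proj_mem; auto; [apply kernel_closed|apply subspace_convex, kernel_subspace]. }
  assert (HLh0 : L h <> 0) by (rewrite HLh; auto).
  exists (hscal X (L h / ip h h) h). intro y.
  assert (Hk : Ker (hsub y (hscal X (L y / L h) h))).
  { unfold Ker. rewrite linear_sub.
    replace (hscal X (L y / L h) h) with (hadd X (hscal X (L y / L h) h) (hscal X 0 h))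
      by hring.
    rewrite hL. field. auto. }
  apply Hhort in Hk. revert Hk. hinner_expand. intro Hk.
  assert (Hh0 : ip h h <> 0).
  { intro Hz. apply hinner_def in Hz. rewrite Hz, linear_0 in HLh0. auto. }
  replace (ip h y) with (L y / L h * ip h h) by lra. field. auto.
Qed.

End BoundedLinear.

Lemma affine_convex B : is_affine X B -> is_convex X B.
Proof. intros [_ HB] y z t Hy Hz _. apply HB; auto. Qed.

Lemma affine_translate_mem B p b b' t : is_affine X B -> B p -> B b -> B b' ->
  B (hadd X p (hscal X t (hsub b b'))).
Proof.
  intros [_ HB] Hp Hb Hb'.
  assert (Hm : B (hadd X (hscal X (1/2) p) (hscal X (1 - 1/2) b))) by (apply HB; auto).
  assert (Hu : B (hadd X (hscal X 2 (hadd X (hscal X (1/2) p) (hscal X (1 - 1/2) b)))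
                        (hscal X (1 - 2) b'))) by (apply HB; auto).
  replace (hadd X (hscal X 2 (hadd X (hscal X (1/2) p) (hscal X (1 - 1/2) b)))
                  (hscal X (1 - 2) b'))
    with (hadd X p (hsub b b')) in Hu
    by (apply hvec_ext; intro; autorewrite with hinner; field).
  replace (hadd X p (hscal X t (hsub b b'))) with
    (hadd X (hscal X t (hadd X p (hsub b b'))) (hscal X (1 - t) p)) by hring.
  apply HB; auto.
Qed.

Lemma mul_le0_eq0 a : (forall t, t * a <= 0) -> a = 0.
Proof. intro H. pose proof (H 1). pose proof (H (-1)). lra. Qed.

Lemma proj_affine_orth B y b b' : is_affine X B -> is_closed X B -> B b -> B b' ->
  ip (hsub y (proj X B y)) (hsub b b') = 0.
Proof.
  intros Ha Hc Hb Hb'.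
  assert (Hne : exists c, B c) by eauto.
  set (p := proj X B y).
  assert (Hp : B p) by (apply proj_mem; auto; apply affine_convex; auto).
  apply mul_le0_eq0. intro t.
  pose proof (proj_variational X B Hne Hc (affine_convex B Ha) y _
    (affine_translate_mem B p b b' t Ha Hp Hb Hb')).
  fold p in H. revert H. hinner_expand. intro. hinner_expand. lra.
Qed.

Lemma proj_affine_eq B y p : is_affine X B -> is_closed X B -> B p ->
  (forall b b', B b -> B b' -> ip (hsub y p) (hsub b b') = 0) -> proj X B y = p.
Proof.
  intros Ha Hc Hp H. apply proj_eq_variational; eauto; [apply affine_convex; auto|].
  intros c Hcc. rewrite H; auto. lra.
Qed.

End Subspace.

Section Weak.
Variable X : Hilbert.
Notation ip := (hinner X).
Implicit Types x y p q c : X.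

Lemma weak_cv_of_pointwise (v : nat -> X) K : (forall n, hnorm (v n) <= K) ->
  (forall y, exists l, Un_cv (fun n => ip (v n) y) l) -> exists p, weak_cv X v p.
Proof.
  intros HK Hcv. destruct (choice _ Hcv) as [L HL].
  assert (HK0 : 0 <= K) by (eapply Rle_trans; [apply hnorm_ge0|apply (HK 0%nat)]).
  assert (HLlin : forall y z a b, L (hadd X (hscal X a y) (hscal X b z)) = a * L y + b * L z).
  { intros. eapply UL_sequence; [apply HL|].
    eapply Un_cv_ext; [|apply (Un_cv_lincomb _ _ _ _ a b (HL y) (HL z))].
    intro n. simpl. hinner_expand. ring. }
  assert (HLb : forall y, Rabs (L y) <= K * hnorm y).
  { intro y. apply (Un_cv_Rabs_le _ _ _ (HL y)). intro n.
    eapply Rle_trans; [apply Rabs_hinner_le|].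
    apply Rmult_le_compat_r; auto. apply hnorm_ge0. }
  destruct (riesz_representation X L K HK0 HLlin HLb) as [p Hp].
  exists p. intro y. rewrite <- Hp. apply HL.
Qed.

Definition cauchy_directions (v : nat -> X) : X -> Prop :=
  fun y => Cauchy_crit (fun n => ip (v n) y).

Lemma cauchy_directions_subspace v : is_subspace X (cauchy_directions v).
Proof.
  split.
  - apply CV_Cauchy. exists 0. eapply Un_cv_ext; [|apply (Un_cv_const 0)].
    intro n. simpl. rewrite hinner_0_r. reflexivity.
  - intros y z a b Hy Hz. apply R_complete in Hy as [ly Hy].
    apply R_complete in Hz as [lz Hz]. apply CV_Cauchy. exists (a * ly + b * lz).
    eapply Un_cv_ext; [|apply (Un_cv_lincomb _ _ _ _ a b Hy Hz)].
    intro n. simpl. hinner_expand. ring.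
Qed.

Lemma cauchy_directions_closed (v : nat -> X) K : (forall n, hnorm (v n) <= K) ->
  is_closed X (cauchy_directions v).
Proof.
  intros HK y Hy eps He.
  assert (HK0 : 0 <= K) by (eapply Rle_trans; [apply hnorm_ge0|apply (HK 0%nat)]).
  destruct (Hy (eps / (3 * (K + 1)))) as [s [Hs Hns]]; [apply Rdiv_lt_0_compat; lra|].
  destruct (Hs (eps / 3)) as [N HN]; [lra|].
  exists N. intros n m Hn Hm. specialize (HN n m Hn Hm). unfold Rdist in *.
  assert (Hclose : forall k, Rabs (ip (v k) y - ip (v k) s) <= eps / 3).
  { intro k. rewrite <- hinner_sub_r. eapply Rle_trans; [apply Rabs_hinner_le|].
    apply Rle_trans with (K * (eps / (3 * (K + 1)))).
    - apply Rmult_le_compat; auto; try apply hnorm_ge0. lra.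
    - apply Rmult_le_reg_r with (3 * (K + 1)); [lra|].
      replace (K * (eps / (3 * (K + 1))) * (3 * (K + 1))) with (K * eps) by (field; lra).
      nra. }
  pose proof (Hclose n). pose proof (Hclose m).
  revert HN H H0. split_Rabs; lra.
Qed.

Section Diagonal.
Variable u : nat -> X.
Variable K : R.
Hypothesis HK : forall n, hnorm (u n) <= K.

(* [nested_subseq (S m)] refines [nested_subseq m] so that [<u _, u m>] becomes Cauchy. *)
Fixpoint nested_subseq (m : nat) : nat -> nat :=
  match m with
  | 0 => fun i => i
  | S m' => fun i =>
      nested_subseq m' (cauchy_subseq (fun k => ip (u (nested_subseq m' k)) (u m')) i)
  end.

Lemma nested_subseq_incr m : strictly_increasing (nested_subseq m).
Proof.
  induction m; simpl; [intro n; lia|].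
  apply strictly_increasing_comp; auto. apply cauchy_subseq_spec.
Qed.

Lemma nested_subseq_tail m k i : (m <= k)%nat ->
  exists j, (i <= j)%nat /\ nested_subseq k i = nested_subseq m j.
Proof.
  revert i. induction k; intros i Hmk.
  - assert (m = 0%nat) by lia. subst. exists i. auto.
  - destruct (Nat.eq_dec m (S k)) as [->|Hne]; [exists i; auto|].
    simpl. set (b := cauchy_subseq _ i).
    destruct (IHk b ltac:(lia)) as [j [Hj Hj']]. exists j. split; auto.
    pose proof (strictly_increasing_ge_id _
      (proj1 (cauchy_subseq_spec (fun k0 => ip (u (nested_subseq k k0)) (u k)))) i).
    unfold b in *. lia.
Qed.

Definition diag_subseq k := nested_subseq k k.

Lemma diag_subseq_incr : strictly_increasing diag_subseq.
Proof.
  intro k. unfold diag_subseq. simpl.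
  set (psi := cauchy_subseq (fun k0 => ip (u (nested_subseq k k0)) (u k))).
  assert (Hpsi : strictly_increasing psi) by apply cauchy_subseq_spec.
  apply Nat.lt_le_trans with (nested_subseq k (S k)); [apply nested_subseq_incr|].
  pose proof (strictly_increasing_ge_id _ Hpsi (S k)).
  destruct (Nat.eq_dec (S k) (psi (S k))) as [E|E]; [rewrite <- E; lia|].
  apply Nat.lt_le_incl, strictly_increasing_lt; [apply nested_subseq_incr|lia].
Qed.

Lemma diag_subseq_cauchy m : cauchy_directions (fun k => u (diag_subseq k)) (u m).
Proof.
  assert (Hc : Cauchy_crit (fun j => ip (u (nested_subseq (S m) j)) (u m))).
  { simpl. apply (cauchy_subseq_spec (fun k => ip (u (nested_subseq m k)) (u m))).
    exists (K * hnorm (u m)). intro n. eapply Rle_trans; [apply Rabs_hinner_le|].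
    apply Rmult_le_compat_r; auto. apply hnorm_ge0. }
  intros eps He. destruct (Hc eps He) as [N HN]. exists (max N (S m)). intros n k Hn Hk.
  unfold diag_subseq.
  destruct (nested_subseq_tail (S m) n n ltac:(lia)) as [j1 [Hj1 E1]].
  destruct (nested_subseq_tail (S m) k k ltac:(lia)) as [j2 [Hj2 E2]].
  rewrite E1, E2. apply HN; lia.
Qed.

End Diagonal.

(* The diagonal subsequence has Cauchy inner products against every [u m], hence against
   their closed span, and trivially against its orthogonal complement. *)
Lemma bounded_weak_cv_subseq (u : nat -> X) K : (forall n, hnorm (u n) <= K) ->
  exists phi p, strictly_increasing phi /\ weak_cv X (fun n => u (phi n)) p.
Proof.
  intro HK.
  set (d := diag_subseq u).
  set (V := cauchy_directions (fun k => u (d k))).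
  assert (HVall : forall y, V y).
  { apply closed_subspace_full.
    - apply cauchy_directions_subspace.
    - apply (cauchy_directions_closed _ K). intro. apply HK.
    - intros y Hy. apply CV_Cauchy. exists 0. eapply Un_cv_ext; [|apply (Un_cv_const 0)].
      intro n. simpl. rewrite hinner_sym. symmetry. apply Hy.
      apply (diag_subseq_cauchy u K HK). }
  destruct (weak_cv_of_pointwise (fun k => u (d k)) K) as [p Hp].
  - intro. apply HK.
  - intro y. destruct (R_complete _ (HVall y)) as [l Hl]. eauto.
  - exists d, p. split; auto. apply diag_subseq_incr.
Qed.

Lemma weak_cv_of_cluster_points (u : nat -> X) K (S : X -> Prop) :
  (forall n, hnorm (u n) <= K) ->
  (forall phi p, strictly_increasing phi -> weak_cv X (fun n => u (phi n)) p -> S p) ->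
  (forall p q, S p -> S q -> exists l, Un_cv (fun n => ip (u n) (hsub p q)) l) ->
  exists p, S p /\ weak_cv X u p.
Proof.
  intros HK Hclust Hconv.
  destruct (bounded_weak_cv_subseq u K HK) as [phi [p [Hphi Hw]]].
  assert (Sp : S p) by (eapply Hclust; eauto).
  exists p. split; auto. intro y. apply NNPP. intro Hn.
  assert (Hfar : exists eps, eps > 0 /\
    forall N, exists n, (N <= n)%nat /\ eps <= Rabs (ip (u n) y - ip p y)).
  { apply NNPP. intro H'. apply Hn. intros eps He. apply NNPP. intro H3. apply H'.
    exists eps. split; auto. intro N. apply NNPP. intro H4. apply H3. exists N.
    intros n Hn'. apply Rnot_le_lt. intro. apply H4. exists n. split; auto. }
  destruct Hfar as [eps [He Hfar]].
  destruct (subseq_exists (fun _ n => eps <= Rabs (ip (u n) y - ip p y))) as [psi [Hpsi Hpsi']].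
  { intros _ N. apply Hfar. }
  destruct (bounded_weak_cv_subseq (fun n => u (psi n)) K (fun n => HK (psi n)))
    as [chi [q [Hchi Hw2]]].
  assert (Hpsichi : strictly_increasing (fun n => psi (chi n)))
    by (apply strictly_increasing_comp; auto).
  assert (Sq : S q) by (apply (Hclust _ _ Hpsichi Hw2)).
  assert (Hpq : eps <= Rabs (ip q y - ip p y))
    by (apply (Un_cv_dist_ge (fun n => ip (u (psi (chi n))) y)); auto).
  destruct (Hconv p q Sp Sq) as [l Hl].
  assert (E1 : l = ip p (hsub p q))
    by (eapply UL_sequence; [apply (Un_cv_subseq _ _ _ Hl Hphi)|apply Hw]).
  assert (E2 : l = ip q (hsub p q))
    by (eapply UL_sequence; [apply (Un_cv_subseq _ _ _ Hl Hpsichi)|apply Hw2]).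
  assert (Hpq0 : p = q) by (apply hsub_eq0, hinner_def; rewrite hinner_sub_l; lra).
  subst q. rewrite Rminus_diag, Rabs_R0 in Hpq. lra.
Qed.

Lemma closed_convex_weak_closed (C : X -> Prop) (v : nat -> X) p :
  (exists c, C c) -> is_closed X C -> is_convex X C ->
  (forall n, C (v n)) -> weak_cv X v p -> C p.
Proof.
  intros Hne Hcl Hcv Hv Hw.
  set (q := proj X C p).
  assert (Hle : forall n, ip (hsub p q) (hsub (v n) q) <= 0)
    by (intro; apply proj_variational; auto).
  assert (Hcvg : Un_cv (fun n => ip (hsub p q) (hsub (v n) q)) (ip (hsub p q) (hsub p q))).
  { replace (ip (hsub p q) (hsub p q)) with (ip p (hsub p q) - ip q (hsub p q))
      by (rewrite hinner_sub_l; ring).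
    eapply Un_cv_ext; [|apply (CV_minus _ _ _ _ (Hw (hsub p q)) (Un_cv_const (ip q (hsub p q))))].
    intro n. simpl. hinner_expand. ring. }
  pose proof (Un_cv_le_0 _ _ Hcvg Hle).
  assert (hsub p q = hzero X) by (apply hinner_def; pose proof (hinner_pos X (hsub p q)); lra).
  rewrite (hsub_eq0 X _ _ H0). apply proj_mem; auto.
Qed.

Lemma weak_cv_0_of_hnorm2_cv_0 (w : nat -> X) : Un_cv (fun n => hnorm2 X (w n)) 0 ->
  forall y, Un_cv (fun n => ip (w n) y) 0.
Proof.
  intros H y eps He.
  pose proof (hnorm_ge0 X y).
  set (r := eps / (hnorm y + 1)).
  assert (Hr : 0 < r) by (apply Rdiv_lt_0_compat; lra).
  destruct (H (r * r)) as [N HN]; [nra|].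
  exists N. intros n Hn. specialize (HN n Hn). unfold Rdist in *. rewrite Rminus_0_r in *.
  rewrite Rabs_right in HN by (apply Rle_ge, hnorm2_ge0).
  apply hnorm_lt_sqr in HN; auto.
  eapply Rle_lt_trans; [apply Rabs_hinner_le|].
  pose proof (hnorm_ge0 X (w n)).
  assert (hnorm (w n) * hnorm y <= r * hnorm y) by (apply Rmult_le_compat_r; lra).
  assert (r * hnorm y < eps) by (unfold r; replace (eps / (hnorm y + 1) * hnorm y)
    with (eps - eps / (hnorm y + 1)) by (field; lra); fold r; lra).
  lra.
Qed.

End Weak.

Section GapVector.
Variable X : Hilbert.
Implicit Types x : X.

Lemma set_diff_convex (A B : X -> Prop) : is_convex X A -> is_convex X B ->
  is_convex X (set_diff X B A).
Proof.
  intros HA HB z1 z2 t [a1 [b1 [Ha1 [Hb1 ->]]]] [a2 [b2 [Ha2 [Hb2 ->]]]] Ht.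
  exists (hadd X (hscal X t a1) (hscal X (1 - t) a2)),
         (hadd X (hscal X t b1) (hscal X (1 - t) b2)).
  split; [apply HA; auto|]. split; [apply HB; auto|]. hring.
Qed.

Lemma is_proj_closure (S : X -> Prop) x : is_convex X S ->
  S (proj X (closure X S) x) -> is_proj X S x (proj X (closure X S) x).
Proof.
  intros Hcv Hp.
  destruct (proj_spec X (closure X S) (ex_intro _ _ (closure_subset X S _ Hp))
    (closure_closed X S) (closure_convex X S Hcv) x) as [_ Hmin].
  split; auto. intros c Hc. apply Hmin, closure_subset, Hc.
Qed.

End GapVector.

Section DouglasRachford.
Variable X : Hilbert.
Notation ip := (hinner X).
Notation hnorm2 := (hnorm2 X).
Variables A B : X -> Prop.
Hypothesis hAne : exists a, A a.
Hypothesis hAcl : is_closed X A.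
Hypothesis hAcv : is_convex X A.
Hypothesis hBcl : is_closed X B.
Hypothesis hBaff : is_affine X B.
Variable g : X.
Hypothesis hg : is_proj X (set_diff X B A) (hzero X) g.
Variable x0 : X.

Lemma B_nonempty : exists b, B b.
Proof. apply hBaff. Qed.

Lemma B_convex : is_convex X B.
Proof. apply affine_convex; auto. Qed.

Lemma gap_variational a b : A a -> B b -> 0 <= ip g (hsub (hsub b a) g).
Proof.
  intros Ha Hb.
  pose proof (is_proj_variational X _ _ _ (set_diff_convex X A B hAcv B_convex) hg
    (hsub b a) ltac:(exists a, b; auto)).
  revert H. hinner_expand. lra.
Qed.

Lemma gap_orth_B b b' : B b -> B b' -> ip g (hsub b b') = 0.
Proof.
  intros Hb Hb'. destruct (proj1 hg) as [a0 [b0 [Ha0 [Hb0 Hg]]]].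
  apply mul_le0_eq0. intro t.
  pose proof (gap_variational a0 _ Ha0 (affine_translate_mem X B b0 b b' (-t) hBaff Hb0 Hb Hb')).
  revert H. rewrite Hg. hinner_expand. intro. nra.
Qed.

Definition in_E e := A e /\ B (hadd X e g).

Lemma E_nonempty : exists e, in_E e.
Proof.
  destruct (proj1 hg) as [a0 [b0 [Ha0 [Hb0 Hg]]]]. exists a0. split; auto.
  replace (hadd X a0 g) with b0; auto. rewrite Hg. hring.
Qed.

Lemma gap_normal_A e a : in_E e -> A a -> ip g (hsub a e) <= 0.
Proof. intros [He1 He2] Ha. pose proof (gap_variational a _ Ha He2). revert H. hinner_expand. lra. Qed.

Lemma proj_A_shift e t : in_E e -> 0 <= t -> proj X A (hadd X e (hscal X t g)) = e.
Proof.
  intros He Ht. apply proj_eq_variational; auto; [apply He|].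
  intros c Hc. pose proof (gap_normal_A e c He Hc). revert H. hinner_expand. intro. nra.
Qed.

Lemma proj_B_shift e t : in_E e -> proj X B (hsub e (hscal X t g)) = hadd X e g.
Proof.
  intros He. apply proj_affine_eq; auto; [apply He|].
  intros b b' Hb Hb'. pose proof (gap_orth_B b b' Hb Hb'). rewrite hinner_sub_r in H.
  hinner_expand. replace (ip g b) with (ip g b') by lra. ring.
Qed.

Notation T := (DR X A B).

Lemma DR_shift e n : in_E e ->
  T (hadd X e (hscal X (INR n) g)) = hadd X e (hscal X (INR (S n)) g).
Proof.
  intro He. unfold DR, refl. rewrite proj_A_shift; auto; [|apply pos_INR].
  replace (hsub (hscal X 2 e) (hadd X e (hscal X (INR n) g)))
    with (hsub e (hscal X (INR n) g)) by hring.
  rewrite proj_B_shift; auto. rewrite S_INR. hring.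
Qed.

Lemma DR_firmly_nonexp u v :
  hnorm2 (hsub (T u) (T v)) + hnorm2 (hsub (hsub u (T u)) (hsub v (T v))) <= hnorm2 (hsub u v).
Proof.
  pose proof (refl_nonexp X A hAne hAcl hAcv u v) as HA.
  pose proof (refl_nonexp X B B_nonempty hBcl B_convex (refl X A u) (refl X A v)) as HB.
  unfold DR. unfold refl in *.
  set (pa := proj X A u) in *. set (pa' := proj X A v) in *.
  set (pb := proj X B (hsub (hscal X 2 pa) u)) in *.
  set (pb' := proj X B (hsub (hscal X 2 pa') v)) in *.
  unfold hnorm2 in *. revert HA HB. hinner_expand. intros. lra.
Qed.

Definition x_ n := Nat.iter n T x0.
Definition a_ n := proj X A (x_ n).
Definition b_ n := proj X B (refl X A (x_ n)).
Definition z_ n := hsub (x_ n) (hscal X (INR n) g).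

Lemma x_S n : x_ (S n) = hadd X (hsub (x_ n) (a_ n)) (b_ n).
Proof. reflexivity. Qed.

Lemma z_fejer e n : in_E e ->
  hnorm2 (hsub (z_ (S n)) e) + hnorm2 (hsub (z_ n) (z_ (S n))) <= hnorm2 (hsub (z_ n) e).
Proof.
  intro He. pose proof (DR_firmly_nonexp (x_ n) (hadd X e (hscal X (INR n) g))) as H.
  rewrite DR_shift in H; auto. change (T (x_ n)) with (x_ (S n)) in H.
  replace (hsub (x_ (S n)) (hadd X e (hscal X (INR (S n)) g))) with (hsub (z_ (S n)) e) in H
    by (unfold z_; hring).
  replace (hsub (hsub (x_ n) (x_ (S n)))
             (hsub (hadd X e (hscal X (INR n) g)) (hadd X e (hscal X (INR (S n)) g))))
    with (hsub (z_ n) (z_ (S n))) in H by (unfold z_; hring).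
  replace (hsub (x_ n) (hadd X e (hscal X (INR n) g))) with (hsub (z_ n) e) in H
    by (unfold z_; hring).
  exact H.
Qed.

Lemma z_dist_decr e n : in_E e -> hnorm2 (hsub (z_ (S n)) e) <= hnorm2 (hsub (z_ n) e).
Proof.
  intro He. pose proof (z_fejer e n He). pose proof (hnorm2_ge0 X (hsub (z_ n) (z_ (S n)))).
  lra.
Qed.

Lemma z_dist_le e n : in_E e -> hnorm2 (hsub (z_ n) e) <= hnorm2 (hsub (z_ 0) e).
Proof. intro He. induction n; [lra|]. pose proof (z_dist_decr e n He). lra. Qed.

Lemma z_dist_cv e : in_E e -> exists l, Un_cv (fun n => hnorm2 (hsub (z_ n) e)) l.
Proof.
  intro He. apply decreasing_nonneg_cv; [intro n; apply z_dist_decr; auto|].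
  intro. apply hnorm2_ge0.
Qed.

Definition gap_defect n := hsub (hsub (b_ n) (a_ n)) g.

Lemma gap_defect_step n : hnorm2 (gap_defect n) = hnorm2 (hsub (z_ n) (z_ (S n))).
Proof. unfold gap_defect, z_. rewrite x_S, S_INR. unfold hnorm2. hinner_expand. ring. Qed.

Lemma gap_defect_cv_0 : Un_cv (fun n => hnorm2 (gap_defect n)) 0.
Proof.
  destruct E_nonempty as [e He]. destruct (z_dist_cv e He) as [l Hl].
  intros eps Heps. destruct (Hl (eps / 2)) as [N HN]; [lra|].
  exists N. intros n Hn. unfold Rdist.
  rewrite Rminus_0_r, Rabs_right by (apply Rle_ge, hnorm2_ge0).
  rewrite gap_defect_step. pose proof (z_fejer e n He).
  pose proof (HN n Hn) as H0. pose proof (HN (S n) ltac:(lia)) as H1. unfold Rdist in *.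
  apply Rabs_def2 in H0. apply Rabs_def2 in H1. lra.
Qed.

Lemma a_bounded e : in_E e -> forall n, hnorm (a_ n) <= hnorm (hsub (z_ 0) e) + hnorm e.
Proof.
  intros He n.
  assert (H1 : hnorm2 (hsub (a_ n) e) <= hnorm2 (hsub (z_ n) e)).
  { unfold a_.
    replace (hsub (proj X A (x_ n)) e)
      with (hsub (proj X A (x_ n)) (proj X A (hadd X e (hscal X (INR n) g))))
      by (rewrite proj_A_shift; auto; apply pos_INR).
    eapply Rle_trans; [apply proj_nonexp; auto|].
    right. unfold z_, hnorm2. f_equal; hring. }
  pose proof (z_dist_le e n He).
  assert (hnorm (hsub (a_ n) e) <= hnorm (hsub (z_ 0) e)) by (apply hnorm_le_sqr; lra).
  replace (a_ n) with (hadd X (hsub (a_ n) e) e) at 1 by hring.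
  pose proof (hnorm_triangle X (hsub (a_ n) e) e). lra.
Qed.

Lemma a_cluster_in_E phi p : strictly_increasing phi ->
  weak_cv X (fun n => a_ (phi n)) p -> in_E p.
Proof.
  intros Hphi Hw. split.
  - apply (closed_convex_weak_closed X A (fun n => a_ (phi n))); auto.
    intro n. unfold a_. apply proj_mem; auto.
  - apply (closed_convex_weak_closed X B (fun n => b_ (phi n)));
      auto using B_nonempty, B_convex.
    + intro n. unfold b_. apply proj_mem; auto using B_nonempty, B_convex.
    + intro y.
      pose proof (Un_cv_subseq _ _ _ (weak_cv_0_of_hnorm2_cv_0 X gap_defect gap_defect_cv_0 y) Hphi)
        as Hw0.
      replace (ip (hadd X p g) y) with (ip p y + ip g y + 0) by (hinner_expand; ring).
      eapply Un_cv_ext;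
        [|apply (CV_plus _ _ _ _ (CV_plus _ _ _ _ (Hw y) (Un_cv_const (ip g y))) Hw0)].
      intro n. simpl. unfold gap_defect. hinner_expand. ring.
Qed.

(* Along p - q with p, q in E, a_ n differs from z_ (S n) only by terms orthogonal to
   p - q, and <z_ n, p - q> is a combination of the convergent distances to p and q. *)
Lemma a_inner_diff_cv p q : in_E p -> in_E q ->
  exists l, Un_cv (fun n => ip (a_ n) (hsub p q)) l.
Proof.
  intros Hp Hq.
  assert (Hpq : hsub p q = hsub (hadd X p g) (hadd X q g)) by hring.
  assert (Hg0 : ip g (hsub p q) = 0) by (rewrite Hpq; apply gap_orth_B; [apply Hp|apply Hq]).
  assert (Hr0 : forall n, ip (hsub (refl X A (x_ n)) (b_ n)) (hsub p q) = 0).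
  { intro n. rewrite Hpq. unfold b_. apply proj_affine_orth; auto; [apply Hp|apply Hq]. }
  assert (Heq : forall n, ip (z_ (S n)) (hsub p q) = ip (a_ n) (hsub p q)).
  { intro n.
    replace (a_ n) with (hadd X (z_ (S n))
        (hadd X (hsub (refl X A (x_ n)) (b_ n)) (hscal X (INR (S n)) g)))
      by (unfold z_; rewrite x_S; unfold refl, a_; hring).
    rewrite hinner_add_l, hinner_add_l, Hr0, hinner_scal_l, Hg0. ring. }
  destruct (z_dist_cv p Hp) as [lp Hlp]. destruct (z_dist_cv q Hq) as [lq Hlq].
  exists ((1/2) * (lq - lp) + (-1/2) * (hnorm2 q - hnorm2 p)).
  apply (Un_cv_ext _ _ Heq). apply (Un_cv_S (fun m => ip (z_ m) (hsub p q))).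
  eapply Un_cv_ext; [|apply (Un_cv_lincomb _ _ _ _ (1/2) (-1/2) (CV_minus _ _ _ _ Hlq Hlp)
     (Un_cv_const (hnorm2 q - hnorm2 p)))].
  intro n. simpl. unfold hnorm2. hinner_expand. field.
Qed.

Lemma a_weak_cv : exists e, in_E e /\ weak_cv X a_ e.
Proof.
  destruct E_nonempty as [e He].
  exact (weak_cv_of_cluster_points X a_ _ in_E (a_bounded e He) a_cluster_in_E a_inner_diff_cv).
Qed.

Lemma proj_B_x_S n : proj X B (x_ (S n)) = proj X B (hadd X (a_ n) g).
Proof.
  set (w := proj X B (hadd X (a_ n) g)).
  apply proj_affine_eq; auto; [apply proj_mem; auto using B_nonempty, B_convex|].
  intros b b' Hb Hb'.
  replace (hsub (x_ (S n)) w) with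
    (hsub (hsub (hsub (hadd X (a_ n) g) w) (hsub (refl X A (x_ n)) (b_ n))) g)
    by (rewrite x_S; unfold refl, a_; hring).
  pose proof (proj_affine_orth X B (hadd X (a_ n) g) b b' hBaff hBcl Hb Hb') as O1.
  pose proof (proj_affine_orth X B (refl X A (x_ n)) b b' hBaff hBcl Hb Hb') as O2.
  pose proof (gap_orth_B b b' Hb Hb') as O3.
  fold w in O1. fold (b_ n) in O2. rewrite !hinner_sub_l in *. lra.
Qed.

Lemma proj_B_x_weak_cv e : in_E e -> weak_cv X a_ e ->
  weak_cv X (fun n => proj X B (x_ n)) (hadd X e g).
Proof.
  intros He Hw y. apply Un_cv_of_S.
  set (w := fun n => proj X B (hadd X (a_ n) g)).
  assert (Hclose : Un_cv (fun n => hnorm2 (hsub (w n) (hadd X (a_ n) g))) 0).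
  { intros eps Heps. destruct (gap_defect_cv_0 eps Heps) as [N HN]. exists N. intros n Hn.
    specialize (HN n Hn). unfold Rdist in *. rewrite Rminus_0_r in *.
    rewrite Rabs_right in * by (apply Rle_ge, hnorm2_ge0).
    eapply Rle_lt_trans; [|apply HN].
    destruct (proj_spec X B B_nonempty hBcl B_convex (hadd X (a_ n) g)) as [_ Hmin].
    specialize (Hmin (b_ n) ltac:(unfold b_; apply proj_mem; auto using B_nonempty, B_convex)).
    apply hnorm_le_sqr in Hmin. fold (w n) in Hmin. unfold gap_defect.
    unfold hnorm2 in *. revert Hmin. hinner_expand. lra. }
  pose proof (weak_cv_0_of_hnorm2_cv_0 X _ Hclose y) as Hw0.
  replace (ip (hadd X e g) y) with (ip e y + ip g y + 0) by (hinner_expand; ring).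
  eapply Un_cv_ext;
    [|apply (CV_plus _ _ _ _ (CV_plus _ _ _ _ (Hw y) (Un_cv_const (ip g y))) Hw0)].
  intro n. simpl. change (T (x_ n)) with (x_ (S n)). rewrite proj_B_x_S. fold (w n).
  hinner_expand. ring.
Qed.

End DouglasRachford.

Theorem theorem2p5 (X : Hilbert) (A B : X -> Prop)
  (hAne : exists a, A a) (hAcl : is_closed X A) (hAcv : is_convex X A)
  (hBcl : is_closed X B) (hBaff : is_affine X B)
  (hg : set_diff X B A (proj X (closure X (set_diff X B A)) (hzero X)))
  (x : X) :
  let g := proj X (closure X (set_diff X B A)) (hzero X) in
  let T := DR X A B in
  (exists e, (A e /\ B (hadd X e g)) /\
     weak_cv X (fun n => proj X A (Nat.iter n T x)) e) /\
  (exists f, (B f /\ A (hsub f g)) /\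
     weak_cv X (fun n => proj X B (Nat.iter n T x)) f).
Proof.
  intros g T.
  assert (Hg : is_proj X (set_diff X B A) (hzero X) g).
  { apply is_proj_closure; auto. apply set_diff_convex; auto. apply affine_convex; auto. }
  destruct (a_weak_cv X A B hAne hAcl hAcv hBcl hBaff g Hg x) as [e [He Hw]].
  split.
  - exists e. auto.
  - exists (hadd X e g). split.
    + split; [apply He|]. replace (hsub (hadd X e g) g) with e by hring. apply He.
    + exact (proj_B_x_weak_cv X A B hAne hAcl hAcv hBcl hBaff g Hg x e He Hw).
Qed.
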